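(* Let $1\le k\le n$ be integers, $\boldsymbol c\in\mathbb{R}^n$, $\theta\in[0,1)$, $\lambda\ge 2$, and $\boldsymbol E\in\mathbb{R}^{n\times d}$ with unit-norm rows satisfying $\boldsymbol e_i^{\mathsf T}\boldsymbol e_j>-1$ for all $i\ne j$. Let $f(\boldsymbol x)=\theta(k-1)\boldsymbol c^{\mathsf T}\boldsymbol x+(1-\theta)\boldsymbol x^{\mathsf T}(\lambda\boldsymbol I-\boldsymbol E\boldsymbol E^{\mathsf T})\boldsymbol x$ and $P=\{\boldsymbol x\in[0,1]^n:\boldsymbol 1^{\mathsf T}\boldsymbol x=k\}$. Consider the Frank--Wolfe iteration with exact line search: given $\boldsymbol x^{(t)}\in P$, let $\boldsymbol s^{(t)}\in\{0,1\}^n$ be the indicator vector of the $k$ largest entries of $\nabla f(\boldsymbol x^{(t)})$, $\boldsymbol d^{(t)}=\boldsymbol s^{(t)}-\boldsymbol x^{(t)}$, $\gamma^{(t)}\in\arg\max_{\gamma\in[0,1]}f(\boldsymbol x^{(t)}+\gamma\boldsymbol d^{(t)})$, and $\boldsymbol x^{(t+1)}=\boldsymbol x^{(t)}+\gamma^{(t)}\boldsymbol d^{(t)}$. Let $\boldsymbol x^\ast\in\{0,1\}^n\cap P$ be an integral local maximizer of $f$ on $P$. Then there exists a neighborhood $\mathcal N(\boldsymbol x^\ast)$ of $\boldsymbol x^\ast$ such that, whenever an iterate $\boldsymbol x^{(t)}\in P\cap\mathcal N(\boldsymbol x^\ast)$ with $\boldsymbol x^{(t)}\ne\boldsymbol x^\ast$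 occurs, the top-$k$ indicator $\boldsymbol s^{(t)}$ is uniquely determined and equals $\boldsymbol x^\ast$, the exact line search returns $\gamma^{(t)}=1$ (uniquely), and hence $\boldsymbol x^{(t+1)}=\boldsymbol x^\ast$.
   Context: A local maximizer of $f$ on $P$ is a point $\boldsymbol x^\ast\in P$ with $f(\boldsymbol x)\le f(\boldsymbol x^\ast)$ for all $\boldsymbol x\in P$ near $\boldsymbol x^\ast$. The exact line search maximizes the one-dimensional quadratic $\gamma\mapsto f(\boldsymbol x^{(t)}+\gamma\boldsymbol d^{(t)})$ over $[0,1]$. *)

From HB Require Import structures.
From mathcomp Require Import all_boot all_order all_algebra.
From mathcomp Require Import reals.
Set Implicit Arguments. Unset Strict Implicit. Unset Printing Implicit Defensive.
Import Order.TTheory GRing.Theory Num.Theory.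
Local Open Scope ring_scope.

Section Defs.
Variables (R : realType) (n d : nat).

Definition sc (A : 'M[R]_1) : R := A 0 0.

Definition Qmat (lam : R) (E : 'M[R]_(n, d)) : 'M[R]_n := lam%:M - E *m E^T.

Definition fobj (k : nat) (c : 'cV[R]_n) (theta lam : R) (E : 'M[R]_(n, d))
  (x : 'cV[R]_n) : R :=
  theta * (k%:R - 1) * sc (c^T *m x) + (1 - theta) * sc (x^T *m Qmat lam E *m x).

Definition gradf (k : nat) (c : 'cV[R]_n) (theta lam : R) (E : 'M[R]_(n, d))
  (x : 'cV[R]_n) : 'cV[R]_n :=
  (theta * (k%:R - 1)) *: c + (1 - theta) *: ((Qmat lam E + (Qmat lam E)^T) *m x).

Definition inP (k : nat) (x : 'cV[R]_n) : Prop :=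
  (forall i, 0 <= x i 0 <= 1) /\ \sum_i x i 0 = k%:R.

Definition binary (x : 'cV[R]_n) : Prop := forall i, x i 0 = 0 \/ x i 0 = 1.

Definition near_vec (r : R) (x y : 'cV[R]_n) : Prop :=
  forall i, `|x i 0 - y i 0| < r.

Definition local_max_on_P (k : nat) (g : 'cV[R]_n -> R) (xs : 'cV[R]_n) : Prop :=
  inP k xs /\ exists2 r : R, 0 < r &
    forall x, inP k x -> near_vec r x xs -> g x <= g xs.

Definition topk_indicator (k : nat) (g s : 'cV[R]_n) : Prop :=
  binary s /\ \sum_i s i 0 = k%:R /\
  forall i j, s i 0 = 1 -> s j 0 = 0 -> g j 0 <= g i 0.

Definition argmax01 (phi : R -> R) (gamma : R) : Prop :=
  0 <= gamma <= 1 /\ forall g', 0 <= g' <= 1 -> phi g' <= phi gamma.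

End Defs.

(* Local maximality of the integral point xs along the exchange directions
   e_j - e_i (x_i = 1, x_j = 0), which have positive curvature because
   lam >= 2 and <e_i, e_j> > -1, forces a strict gradient gap
   grad f(xs)_j < grad f(xs)_i.  The gradient is Lipschitz, so the gap persists
   on a neighbourhood of xs; there the top-k selection is xs, and for
   g in [0, 1) the increment f(xs) - f(x + g (xs - x)) is (1 - g) times the
   derivative along xs - x at the midpoint of the segment, which the gap makes
   positive: the line search must return 1. *)

From HB Require Import structures.
From mathcomp Require Import all_boot all_order all_algebra.
From mathcomp Require Import reals ring lra.
Set Implicit Arguments. Unset Strict Implicit. Unset Printing Implicit Defensive.
Import Order.TTheory GRing.Theory Num.Theory.
Local Open Scope ring_scope.

Section BilinearForms.
Variables (R : realType) (n : nat).
Implicit Types (u v w : 'cV[R]_n) (Q : 'M[R]_n).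

Lemma scD (A B : 'M[R]_1) : sc (A + B) = sc A + sc B.
Proof. by rewrite /sc mxE. Qed.

Lemma scZ s (A : 'M[R]_1) : sc (s *: A) = s * sc A.
Proof. by rewrite /sc mxE. Qed.

Lemma scT (A : 'M[R]_1) : sc A^T = sc A.
Proof. by rewrite /sc mxE. Qed.

Definition bform Q u v := sc (u^T *m Q *m v).
Definition dot u v := sc (u^T *m v).

Lemma bformDl Q u v w : bform Q (u + v) w = bform Q u w + bform Q v w.
Proof. by rewrite /bform linearD /= !mulmxDl scD. Qed.

Lemma bformDr Q u v w : bform Q w (u + v) = bform Q w u + bform Q w v.
Proof. by rewrite /bform mulmxDr scD. Qed.

Lemma bformZl Q s u w : bform Q (s *: u) w = s * bform Q u w.
Proof. by rewrite /bform linearZ /= -!scalemxAl scZ. Qed.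

Lemma bformZr Q s u w : bform Q w (s *: u) = s * bform Q w u.
Proof. by rewrite /bform -!scalemxAr scZ. Qed.

Lemma bform_trmx Q u v : bform Q^T u v = bform Q v u.
Proof. by rewrite /bform -scT !trmx_mul !trmxK mulmxA. Qed.

Lemma bform_delta Q i j : bform Q (delta_mx i 0) (delta_mx j 0) = Q i j.
Proof. by rewrite /bform trmx_delta -rowE -colE /sc !mxE. Qed.

Lemma dotDr u v w : dot w (u + v) = dot w u + dot w v.
Proof. by rewrite /dot mulmxDr scD. Qed.

Lemma dotZr s u w : dot w (s *: u) = s * dot w u.
Proof. by rewrite /dot -!scalemxAr scZ. Qed.

Lemma dotE u v : dot u v = \sum_i u i 0 * v i 0.
Proof. by rewrite /dot /sc mxE; apply: eq_bigr => i _; rewrite mxE. Qed.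

Lemma dot_delta u j : dot u (delta_mx j 0) = u j 0.
Proof. by rewrite /dot -colE /sc !mxE. Qed.

End BilinearForms.

Section ColumnVectors.
Variables (R : realType) (n : nat).
Implicit Types (x y s t v : 'cV[R]_n).

Lemma sum_col_delta j : \sum_l (delta_mx j 0 : 'cV[R]_n) l 0 = 1.
Proof.
rewrite (bigD1 j) //= mxE !eqxx big1 ?addr0 // => l /negbTE nl.
by rewrite mxE nl.
Qed.

Lemma binary_eq_of_le s t : binary s -> binary t ->
  \sum_i s i 0 = \sum_i t i 0 -> (forall j, t j 0 = 1 -> s j 0 = 1) -> s = t.
Proof.
move=> bs bt sst st; have ge0 j : 0 <= s j 0 - t j 0.
  by have [et|et] := bt j; [have [es|es] := bs j | rewrite (st j et)];
     rewrite ?et ?es; lra.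
have /(psumr_eq0P (fun i _ => ge0 i)) eq0 : \sum_i (s i 0 - t i 0) = 0.
  by rewrite sumrB sst subrr.
by apply/matrixP => i j; rewrite (ord1 j); apply/eqP; rewrite -subr_eq0 eq0.
Qed.

Section TopK.
Variables (k : nat) (g xs : 'cV[R]_n).
Hypotheses (bxs : binary xs) (sum_xs : \sum_i xs i 0 = k%:R).
Hypothesis gap : forall i j, xs i 0 = 1 -> xs j 0 = 0 -> g j 0 < g i 0.

Lemma topk_indicator_gap : topk_indicator k g xs.
Proof. by do 2!split=> //; move=> i j xi xj; exact/ltW/gap. Qed.

Lemma topk_indicator_gap_unique s : topk_indicator k g s -> s = xs.
Proof.
move=> [bs [sum_s s_top]].
have sxs : \sum_i s i 0 = \sum_i xs i 0 by rewrite sum_s sum_xs.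
apply/esym/binary_eq_of_le => // i si; have [xi|//] := bxs i; exfalso.
have [l /andP[/eqP sl /eqP xl] | no_swap] :=
  pickP [pred l | (s l 0 == 0) && (xs l 0 == 1)].
  by have := s_top i l si sl; have := gap xl xi; lra.
have /(congr1 (fun v : 'cV[R]_n => v i 0)) : s = xs.
  apply: binary_eq_of_le => // l xl; have [|sl] := bs l; last by [].
  by move=> sl; move: (no_swap l); rewrite /= sl xl !eqxx.
by rewrite si xi => /eqP; rewrite oner_eq0.
Qed.

End TopK.

Lemma sum_gap_weight_gt0 (f D : 'I_n -> R) (S : pred 'I_n) :
  (forall i j, S i -> ~~ S j -> f j < f i) ->
  (forall i, S i -> 0 <= D i) -> (forall j, ~~ S j -> D j <= 0) ->
  \sum_i D i = 0 -> (exists p, D p != 0) -> 0 < \sum_i f i * D i.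
Proof.
move=> gapS Dp Dn D0 [p Dp0].
have [i0 Si0 | noS] := pickP S; last first.
  have Nge0 i : 0 <= - D i by rewrite oppr_ge0 Dn ?noS.
  have /(psumr_eq0P (fun i _ => Nge0 i)) N0 : \sum_i - D i = 0.
    by rewrite sumrN D0 oppr0.
  by move: Dp0; rewrite -oppr_eq0 N0 ?eqxx.
(* Subtracting the threshold [tau] makes every summand nonnegative. *)
set tau := \big[Order.min/f i0]_(i | S i) f i.
have tau_le i : S i -> tau <= f i := fun Si => bigmin_le_cond _ _ Si.
have tau_gt j : ~~ S j -> f j < tau.
  by move=> Sj; apply/bigmin_gtP; split=> [|i Si]; exact: gapS.
have -> : \sum_i f i * D i = \sum_i (f i - tau) * D i.
  under [RHS]eq_bigr do rewrite mulrBl.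
  by rewrite sumrB -mulr_sumr D0 mulr0 subr0.
have term_ge0 i : 0 <= (f i - tau) * D i.
  case Si: (S i).
    by apply: mulr_ge0; [rewrite subr_ge0 tau_le | exact: Dp].
  by apply: mulr_le0; [rewrite subr_le0 ltW ?tau_gt ?Si | apply: Dn; rewrite Si].
rewrite lt_def sumr_ge0 // andbT; apply/eqP => /(psumr_eq0P (fun i _ => term_ge0 i)) z.
have Dout j : ~~ S j -> D j = 0.
  move=> Sj; move/eqP: (z j isT); rewrite mulf_eq0 subr_eq0 => /orP[/eqP e|/eqP //].
  by have := tau_gt j Sj; rewrite e ltxx.
have Dout0 : \sum_(j | ~~ S j) D j = 0 by apply: big1 => j; exact: Dout.
move: D0; rewrite (bigID S) /= Dout0 addr0 => D0.
have Din := psumr_eq0P Dp D0.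
by move/eqP: Dp0; apply; case Sp: (S p); [exact: Din | apply: Dout; rewrite Sp].
Qed.

Lemma near_vec_segment r x y (t : R) : 0 <= t <= 1 ->
  near_vec r x y -> near_vec r (x + t *: (y - x)) y.
Proof.
move=> /andP[t0 t1] xy l.
have -> : (x + t *: (y - x)) l 0 - y l 0 = (1 - t) * (x l 0 - y l 0).
  by rewrite !mxE; ring.
rewrite normrM ger0_norm ?subr_ge0 //; apply: le_lt_trans (xy l).
by rewrite ler_piMl ?normr_ge0 // lerBlDr lerDl.
Qed.

Lemma mulmx_col_norm_le (M : 'M[R]_n) v (r : R) i : 0 < r ->
  (forall j, `|v j 0| < r) ->
  `|(M *m v) i 0| <= (\sum_i' \sum_j `|M i' j|) * r.
Proof.
move=> r0 vr; rewrite mxE; apply: le_trans (ler_norm_sum _ _ _) _.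
apply: le_trans (_ : \sum_j `|M i j| * r <= _).
  by apply: ler_sum => j _; rewrite normrM ler_wpM2l // ltW.
rewrite -mulr_suml; apply: ler_wpM2r; first exact: ltW.
rewrite [leRHS](bigD1 i) //= lerDl.
by apply: sumr_ge0 => i' _; apply: sumr_ge0.
Qed.

End ColumnVectors.

Lemma uniform_pos_lower_bound (R : realType) (T : finType) (P : pred T) (h : T -> R) :
  (forall p, P p -> 0 < h p) -> exists2 e : R, 0 < e & forall p, P p -> e <= h p.
Proof.
move=> hP; exists (\big[Order.min/1]_(p | P p) h p).
  by apply/bigmin_gtP; split=> // p; exact: hP.
by move=> p Pp; exact: bigmin_le_cond.
Qed.

Lemma argmax01_eq1 (R : realType) (phi : R -> R) :
  (forall g, 0 <= g < 1 -> phi g < phi 1) ->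
  forall gamma, argmax01 phi gamma <-> gamma = 1.
Proof.
move=> lt1 gamma; split=> [[/andP[g0 g1] gmax] | ->].
  have [glt1|] := ltP gamma 1; last lra.
  by have := gmax 1; have := lt1 gamma; rewrite g0 glt1 ler01 lexx; lra.
split=> [|g /andP[g0 g1]]; first by rewrite ler01 lexx.
have [glt1|g_ge1] := ltP g 1; first by apply/ltW/lt1; rewrite g0.
by have -> : g = 1 by lra.
Qed.

Section Exchange.
Variables (R : realType) (n : nat).

Definition exchange (i j : 'I_n) : 'cV[R]_n := delta_mx j 0 - delta_mx i 0.

Lemma dot_exchange (g : 'cV[R]_n) i j : dot g (exchange i j) = g j 0 - g i 0.
Proof. by rewrite dotDr -scaleN1r dotZr !dot_delta; ring. Qed.

Lemma inP_exchange k (x : 'cV[R]_n) i j t : inP k x -> x i 0 = 1 -> x j 0 = 0 ->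
  0 <= t <= 1 -> inP k (x + t *: exchange i j).
Proof.
move=> [x01 sum_x] xi xj /andP[t0 t1]; split=> [l|].
  rewrite !mxE !andbT; have := x01 l.
  have [-> | _] := eqVneq l j.
    have [ji | _] := eqVneq j i; last by rewrite xj /=; lra.
    by move: xi; rewrite -ji xj; lra.
  by have [->|_] := eqVneq l i; rewrite ?xi /=; lra.
have -> : \sum_l (x + t *: exchange i j) l 0 = \sum_l x l 0 +
    t * (\sum_l (delta_mx j 0 : 'cV[R]_n) l 0 - \sum_l (delta_mx i 0 : 'cV[R]_n) l 0).
  rewrite -sumrB mulr_sumr -big_split /=.
  by apply: eq_bigr => l _; rewrite !mxE; ring.
by rewrite !sum_col_delta sum_x; ring.
Qed.

Lemma near_vec_exchange r (x : 'cV[R]_n) i j t : 0 <= t < r ->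
  near_vec r (x + t *: exchange i j) x.
Proof.
move=> /andP[t0 tr] l; rewrite !mxE !andbT addrAC subrr add0r normrM ger0_norm //.
apply: le_lt_trans tr; rewrite ler_piMr //.
by case: (l == j); case: (l == i); rewrite /= ?subrr ?subr0 ?sub0r ?normrN ?normr0 ?normr1.
Qed.

End Exchange.
Arguments exchange {R n}.

Section Objective.
Variables (R : realType) (n d k : nat) (c : 'cV[R]_n) (theta lam : R).
Variable E : 'M[R]_(n, d).
Implicit Types (x y m w D xs : 'cV[R]_n).
Local Notation f := (fobj k c theta lam E).
Local Notation grad := (gradf k c theta lam E).
Local Notation Q := (Qmat lam E).

Lemma dot_gradf m w : dot (grad m) w =
  theta * (k%:R - 1) * dot c w + (1 - theta) * (bform Q m w + bform Q w m).
Proof.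
rewrite /dot /gradf linearD /= !linearZ /= mulmxDl -!scalemxAl scD !scZ.
rewrite trmx_mul linearD /= trmxK mulmxDr mulmxDl scD.
rewrite -!mulmxA !mulmxA -[sc (m^T *m _^T *m w)]/(bform Q^T m w).
by rewrite bform_trmx [bform Q w m + _]addrC.
Qed.

Lemma fobjD y w : f (y + w) = f y + dot (grad y) w + (1 - theta) * bform Q w w.
Proof.
rewrite dot_gradf /fobj -![sc (_^T *m _ *m _)]/(bform _ _ _).
rewrite -![sc (c^T *m _)]/(dot _ _).
by rewrite dotDr !bformDl !bformDr; ring.
Qed.

(* Exact for quadratics: the increment along a segment is the directional
   derivative at its midpoint. *)
Lemma fobj_line_midpoint x D g : f (x + 1 *: D) - f (x + g *: D) =
  (1 - g) * dot (grad (x + ((1 + g) / 2) *: D)) D.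
Proof.
have -> : x + 1 *: D = (x + g *: D) + (1 - g) *: D.
  by apply/matrixP=> i j; rewrite !mxE; ring.
have -> : x + ((1 + g) / 2) *: D = (x + g *: D) + (2^-1 * (1 - g)) *: D.
  by apply/matrixP=> i j; rewrite !mxE; field.
by rewrite fobjD !dot_gradf !bformDl !bformDr !bformZl !bformZr !dotZr; field.
Qed.

Lemma gradfB y x : grad y - grad x = (1 - theta) *: ((Q + Q^T) *m (y - x)).
Proof. by rewrite /gradf mulmxBr scalerBr opprD addrACA subrr add0r. Qed.

Lemma gradf_gap_nbhd xs :
  (forall i j, xs i 0 = 1 -> xs j 0 = 0 -> grad xs j 0 < grad xs i 0) ->
  exists2 r : R, 0 < r & forall y, near_vec r y xs ->
    forall i j, xs i 0 = 1 -> xs j 0 = 0 -> grad y j 0 < grad y i 0.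
Proof.
move=> gap.
have gap_pos (p : 'I_n * 'I_n) : (xs p.1 0 == 1) && (xs p.2 0 == 0) ->
    0 < grad xs p.1 0 - grad xs p.2 0.
  by case: p => i j /andP[/eqP xi /eqP xj]; rewrite subr_gt0 gap.
have [del del0 del_le] := uniform_pos_lower_bound gap_pos.
set C := `|1 - theta| * \sum_i \sum_j `|(Q + Q^T) i j|.
have C0 : 0 <= C by rewrite mulr_ge0 // sumr_ge0 // => i _; rewrite sumr_ge0.
have r0 : 0 < del / (4 * (C + 1)) by rewrite divr_gt0 // mulr_gt0 //; lra.
exists (del / (4 * (C + 1))) => // y near_y i j xi xj.
have dev l : `|grad y l 0 - grad xs l 0| <= del / 4.
  have -> : grad y l 0 - grad xs l 0 = (grad y - grad xs) l 0 by rewrite !mxE.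
  have near_diff q : `|(y - xs) q 0| < del / (4 * (C + 1)).
    by rewrite !mxE; exact: near_y.
  rewrite gradfB mxE normrM.
  apply: le_trans (ler_wpM2l (normr_ge0 _) (mulmx_col_norm_le _ _ r0 near_diff)) _.
  rewrite mulrA -/C.
  have -> : del / 4 = (C + 1) * (del / (4 * (C + 1))) by field; lra.
  by rewrite ler_wpM2r ?lerDl // ltW.
have := dev i; have := dev j; have := del_le (i, j); rewrite /= xi xj !eqxx.
by move=> /(_ isT) le_gap; rewrite !ler_norml => /andP[? ?] /andP[? ?]; lra.
Qed.

Lemma Qmat_entry i j :
  Q i j = lam *+ (i == j) - sc (row i E *m (row j E)^T).
Proof.
by rewrite !mxE; congr (_ - _); rewrite /sc !mxE; apply: eq_bigr => l _; rewrite !mxE.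
Qed.

Section Hypotheses.
Hypothesis lam_ge2 : 2 <= lam.
Hypothesis unit_rows : forall i, sc (row i E *m (row i E)^T) = 1.
Hypothesis rows_not_opposite :
  forall i j : 'I_n, i != j -> - 1 < sc (row i E *m (row j E)^T).

(* [e_j - e_i] has curvature 2 lam - 2 + 2 <e_i, e_j> > 2 lam - 4 >= 0. *)
Lemma bform_exchange_gt0 (i j : 'I_n) :
  i != j -> 0 < bform Q (exchange i j) (exchange i j).
Proof.
move=> nij; rewrite /exchange -scaleN1r !bformDl !bformDr !bformZl !bformZr.
rewrite !bform_delta !Qmat_entry !eqxx (negbTE nij) eq_sym (negbTE nij) /=.
rewrite !unit_rows mulr1n mulr0n.
have := rows_not_opposite nij; rewrite eq_sym in nij.
have := rows_not_opposite nij; have := lam_ge2; lra.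
Qed.

Lemma gradf_gap_local_max xs : theta < 1 -> local_max_on_P k f xs ->
  forall i j, xs i 0 = 1 -> xs j 0 = 0 -> grad xs j 0 < grad xs i 0.
Proof.
move=> th1 [xsP [r r0 xs_max]] i j xi xj.
have nij : i != j.
  by apply/eqP=> eij; move: xi; rewrite eij xj => /eqP; rewrite eq_sym oner_eq0.
set t := Num.min 1 (r / 2).
have t0 : 0 < t by rewrite lt_min ltr01 divr_gt0.
have t1 : t <= 1 by rewrite ge_min lexx.
have tr : t < r by apply: le_lt_trans (_ : r / 2 < r); rewrite ?ge_min ?lexx ?orbT //; lra.
have curv := bform_exchange_gt0 nij.
have := xs_max _ (inP_exchange xsP xi xj (_ : 0 <= t <= 1))
  (near_vec_exchange xs i j (_ : 0 <= t < r)).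
rewrite fobjD dotZr bformZl bformZr dot_exchange ltW ?t1 ?tr // => /(_ isT isT) le_max.
set q := bform Q (exchange i j) (exchange i j) in curv le_max.
have : t * (grad xs j 0 - grad xs i 0 + (1 - theta) * t * q) <= 0 by lra.
rewrite pmulr_rle0 // => h.
have : 0 < (1 - theta) * t * q by rewrite !mulr_gt0 // subr_gt0.
lra.
Qed.

End Hypotheses.

Lemma fobj_lt_toward_vertex r x xs : binary xs -> inP k xs -> inP k x -> x != xs ->
  near_vec r x xs ->
  (forall y, near_vec r y xs ->
     forall i j, xs i 0 = 1 -> xs j 0 = 0 -> grad y j 0 < grad y i 0) ->
  forall g, 0 <= g < 1 -> f (x + g *: (xs - x)) < f (x + 1 *: (xs - x)).
Proof.
move=> bxs [_ sum_xs] [x01 sum_x] xne near_x gap_near g /andP[g0 g1].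
rewrite -subr_gt0 fobj_line_midpoint mulr_gt0 ?subr_gt0 // dotE.
set mid := x + _ *: _.
have near_mid : near_vec r mid xs by apply: near_vec_segment => //; lra.
have xs0 j : xs j 0 != 1 -> xs j 0 = 0 by case: (bxs j) => ->; rewrite ?eqxx.
apply: (@sum_gap_weight_gt0 _ _ (fun i => grad mid i 0) (fun i => (xs - x) i 0)
                            [pred i | xs i 0 == 1]).
- by move=> i j /eqP xi /xs0 xj; exact: gap_near.
- by move=> i /eqP xi; rewrite !mxE xi; have := x01 i; lra.
- by move=> j /xs0 xj; rewrite !mxE xj; have := x01 j; lra.
- have -> : \sum_i (xs - x) i 0 = \sum_i xs i 0 - \sum_i x i 0.
    by rewrite -sumrB; apply: eq_bigr => i _; rewrite !mxE.
  by rewrite sum_xs sum_x subrr.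
- have /matrix0Pn [p [q nz]] : xs - x != 0 by rewrite subr_eq0 eq_sym.
  by exists p; rewrite -(ord1 q).
Qed.

End Objective.

Theorem theorem4 (R : realType) (n d k : nat) (c : 'cV[R]_n) (theta lam : R)
  (E : 'M[R]_(n, d)) (xs : 'cV[R]_n) :
  (1 <= k)%N -> (k <= n)%N ->
  0 <= theta < 1 -> 2 <= lam ->
  (forall i, sc (row i E *m (row i E)^T) = 1) ->
  (forall i j, i != j -> - 1 < sc (row i E *m (row j E)^T)) ->
  binary xs -> local_max_on_P k (fobj k c theta lam E) xs ->
  exists2 r : R, 0 < r &
    forall x : 'cV[R]_n, inP k x -> near_vec r x xs -> x != xs ->
      (topk_indicator k (gradf k c theta lam E x) xs /\
       forall s, topk_indicator k (gradf k c theta lam E x) s -> s = xs) /\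
      (forall gamma, argmax01 (fun g => fobj k c theta lam E (x + g *: (xs - x))) gamma
                     <-> gamma = 1) /\
      x + 1 *: (xs - x) = xs.
Proof.
move=> _ _ /andP[_ th1] lam2 unit_rows rows_not_opposite bxs xs_max.
have xsP := xs_max.1; have [_ sum_xs] := xsP.
have gap_xs := gradf_gap_local_max lam2 unit_rows rows_not_opposite th1 xs_max.
have [r r0 gap_near] := gradf_gap_nbhd gap_xs.
exists r => // x xP near_x xne; have gap_x := gap_near x near_x.
split; [split | split].
- exact: topk_indicator_gap.
- exact: topk_indicator_gap_unique.
- by apply: argmax01_eq1; exact: fobj_lt_toward_vertex.
- by rewrite scale1r addrC subrK.
Qed.
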